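(* Let $n\ge1$, $k\ge1$ and take weights $a_j=1/j$. Then \[ \mathbb E(S_{n,k})=\frac{1}{\zeta^\star_n(\{1\}_k)}\sum_{\ell=0}^{k-2}H_n^{(\ell+2)}\,\zeta^\star_n(\{1\}_{k-\ell-2}) \] (the sum being empty, hence $0$, for $k=1$).
   Context: For $\vec\ell=(\ell_1,\dots,\ell_k)$ with $n\ge\ell_1\ge\cdots\ge\ell_k\ge1$ let $\sigma(\vec\ell)=|\{1\le j\le k-1:\ell_j=\ell_{j+1}\}|$. With $a_j=1/j$, $\theta_{n;k}(t)=\zeta^t_n(\{1\}_k)=\sum_{n\ge\ell_1\ge\cdots\ge\ell_k\ge1}t^{\sigma(\vec\ell)}\prod_i\ell_i^{-1}$, and $S_{n,k}$ is the random variable with $\mathbb P\{S_{n,k}=j\}=[t^j]\theta_{n;k}(t)/\theta_{n;k}(1)$. $\zeta^\star_n(\{1\}_k)=\theta_{n;k}(1)$, with $\zeta^\star_n(\{1\}_0)=1$; $H_n^{(i)}=\sum_{m=1}^nm^{-i}$. *)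

From HB Require Import structures.
From mathcomp Require Import all_boot all_order all_algebra.
Set Implicit Arguments. Unset Strict Implicit. Unset Printing Implicit Defensive.
Import Order.TTheory GRing.Theory Num.Theory.
Local Open Scope ring_scope.

(* An index vector  n >= l_1 >= ... >= l_k >= 1  is encoded as
   f : {ffun 'I_k -> 'I_n}, with l_(i+1) = (f i).+1 (i zero-based). *)
Definition ell (n k : nat) (f : {ffun 'I_k -> 'I_n}) (i : 'I_k) : nat := (f i).+1.

Definition nonincr (n k : nat) (f : {ffun 'I_k -> 'I_n}) : bool :=
  [forall i : 'I_k, forall j : 'I_k, (i <= j)%N ==> (ell f j <= ell f i)%N].

Definition ellseq (n k : nat) (f : {ffun 'I_k -> 'I_n}) : seq nat :=
  [seq ell f i | i <- enum 'I_k].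

(* sigma(l) = #{ 1 <= j <= k-1 : l_j = l_(j+1) } (here j zero-based, j < k-1) *)
Definition sigma (n k : nat) (f : {ffun 'I_k -> 'I_n}) : nat :=
  count (fun j => nth 0%N (ellseq f) j == nth 0%N (ellseq f) j.+1) (iota 0 k.-1).

Definition wprod (n k : nat) (f : {ffun 'I_k -> 'I_n}) : rat :=
  \prod_(i < k) ((ell f i)%:R)^-1.

Definition theta (n k : nat) : {poly rat} :=
  \sum_(f : {ffun 'I_k -> 'I_n} | nonincr f) (wprod f)%:P * 'X^(sigma f).

(* zeta^star_n({1}_k) = sum_{n >= l_1 >= ... >= l_k >= 1} prod_i 1/l_i
   (equals 1 for k = 0: the empty tuple) *)
Definition zeta_star (n k : nat) : rat :=
  \sum_(f : {ffun 'I_k -> 'I_n} | nonincr f) wprod f.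

(* P{S_{n,k} = j} = [t^j] theta_{n;k}(t) / theta_{n;k}(1) *)
Definition probS (n k j : nat) : rat := (theta n k)`_j / (theta n k).[1].

(* E(S_{n,k}) = sum_j j P{S_{n,k} = j}; the support lies in [0, size theta) *)
Definition expS (n k : nat) : rat :=
  \sum_(j < size (theta n k)) j%:R * probS n k j.

Definition harm (n i : nat) : rat := \sum_(1 <= m < n.+1) (m%:R ^+ i)^-1.

From HB Require Import structures.
From mathcomp Require Import all_boot all_order all_algebra.
From mathcomp Require Import ring zify.
Import Order.TTheory GRing.Theory Num.Theory.
Local Open Scope ring_scope.

(* Since [theta n k] is the generating polynomial of [S_{n,k}], its mean is
   theta'(1) / theta(1) = T_{n,k} / zeta*_n({1}_k), where T_{n,k} sums
   sigma(l) prod_i 1/l_i over all index vectors.  Splitting off the first entry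
   l_1 = a gives
     zeta*_n({1}_{k+1}) = sum_{a <= n} zeta*_a({1}_k) / a,
     T_{n,k+1} = sum_{a <= n} (T_{a,k} + zeta*_a({1}_{k-1}) / a) / a,
   the extra term counting the tie l_1 = l_2 = a.  Using
   zeta*_{n+1}({1}_m) = sum_l zeta*_n({1}_{m-l}) / (n+1)^l, the claimed right-hand
   side satisfies the same recurrence in n, so it equals T_{n,k} by induction on
   n and k. *)

Lemma horner1_deriv (R : nzRingType) (p : {poly R}) :
  p^`().[1] = \sum_(j < size p) j%:R * p`_j.
Proof.
rewrite /deriv horner_poly; case: (size p) => [|m] /=; first by rewrite !big_ord0.
rewrite big_ord_recl mul0r add0r; apply: eq_bigr => i _.
by rewrite expr1n !mulr1 mulr_natl.
Qed.

Definition tie_sum n k : rat :=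
  \sum_(f : {ffun 'I_k -> 'I_n} | nonincr f) (sigma f)%:R * wprod f.

Lemma theta_horner1 n k : (theta n k).[1] = zeta_star n k.
Proof.
rewrite /theta horner_sum; apply: eq_bigr => f _.
by rewrite hornerCM hornerXn expr1n mulr1.
Qed.

Lemma theta_deriv_horner1 n k : (theta n k)^`().[1] = tie_sum n k.
Proof.
rewrite /theta raddf_sum horner_sum; apply: eq_bigr => f _.
by rewrite mul_polyC /= derivZ hornerZ derivXn hornerMn hornerXn expr1n mulrC.
Qed.

Lemma expS_tie_sum n k : expS n k = tie_sum n k / zeta_star n k.
Proof.
rewrite /expS /probS -theta_deriv_horner1 -theta_horner1 horner1_deriv mulr_suml.
by under eq_bigr do rewrite mulrA.
Qed.

Fixpoint nonincr_seqs (n k : nat) : seq (seq nat) :=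
  if k is k'.+1 then [seq a :: t | a <- index_iota 1 n.+1, t <- nonincr_seqs a k']
  else [:: [::]].

Lemma nonincr_seqsS n k :
  nonincr_seqs n k.+1 = [seq a :: t | a <- index_iota 1 n.+1, t <- nonincr_seqs a k].
Proof. by []. Qed.

Definition seq_weight (s : seq nat) : rat := \prod_(x <- s) x%:R^-1.

Definition seq_ties (s : seq nat) : nat :=
  count (fun j => nth 0%N s j == nth 0%N s j.+1) (iota 0 (size s).-1).

Definition head_tie (a : nat) (t : seq nat) : nat :=
  if t is b :: _ then a == b else false.

Lemma seq_ties_cons a t : seq_ties (a :: t) = (head_tie a t + seq_ties t)%N.
Proof.
rewrite /seq_ties /=; case: t => [|b t] //=.
rewrite -(addn0 1%N) iotaDl count_map /=.
by congr (_ + _)%N; apply: eq_count.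
Qed.

Lemma geq_trans : transitive geq.
Proof. exact: rev_trans leq_trans. Qed.

Lemma mem_nonincr_seqs n k s :
  (s \in nonincr_seqs n k) = [&& size s == k, all (fun x => 0 < x <= n)%N s & sorted geq s].
Proof.
elim: k n s => [|k IHk] n s; first by case: s.
have bounded_by a t : (a <= n)%N ->
    all (fun x => 0 < x <= a)%N t = all (fun x => 0 < x <= n)%N t && all (geq a) t.
  by move=> le_an; rewrite -all_predI; apply: eq_all => x /=; apply/idP/idP; lia.
apply/allpairsPdep/idP => [[a [t [a_range t_in ->]]] | ].
  rewrite mem_index_iota in a_range; rewrite IHk in t_in.
  case/and3P: t_in => /eqP <- a_bounds t_sorted.
  rewrite /= eqxx (path_sortedE geq_trans) t_sorted.
  rewrite bounded_by in a_bounds; last by lia.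
  by case/andP: a_bounds => -> ->; rewrite !andbT; lia.
case: s => [|a t] //= /and3P [size_t /andP [a_range t_bounds]].
rewrite (path_sortedE geq_trans) => /andP [le_ta t_sorted].
exists a, t; split => //; first by rewrite mem_index_iota; lia.
by rewrite IHk -eqSS size_t bounded_by ?t_bounds ?le_ta; lia.
Qed.

Lemma uniq_nonincr_seqs n k : uniq (nonincr_seqs n k).
Proof.
elim: k n => [|k IHk] n //=.
apply: allpairs_uniq_dep; first exact: iota_uniq.
- by move=> a _; exact: IHk.
- by move=> [a t] [b u] _ _ [-> ->].
Qed.

Section EllSeq.
Variables n k : nat.
Implicit Types f : {ffun 'I_k -> 'I_n}.

Lemma size_ellseq f : size (ellseq f) = k.
Proof. by rewrite size_map size_enum_ord. Qed.

Lemma nth_ellseq f (i : 'I_k) : nth 0%N (ellseq f) i = ell f i.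
Proof. by rewrite (nth_map i) ?size_enum_ord // nth_ord_enum. Qed.

Lemma ellseq_inj : injective (@ellseq n k).
Proof.
move=> f g eq_fg; apply/ffunP => i; apply/val_inj/succn_inj.
by rewrite -[LHS]/(ell f i) -[RHS]/(ell g i) -!nth_ellseq eq_fg.
Qed.

Lemma wprod_ellseq f : wprod f = seq_weight (ellseq f).
Proof. by rewrite /wprod /seq_weight big_map big_enum. Qed.

Lemma sigma_ellseq f : sigma f = seq_ties (ellseq f).
Proof. by rewrite /sigma /seq_ties size_ellseq. Qed.

Lemma nonincr_sorted f : nonincr f = sorted geq (ellseq f).
Proof.
apply/forallP/idP => [le_f | sorted_f i].
  apply/(sortedP 0%N) => i; rewrite size_ellseq => lt_i1k.
  have lt_ik : (i < k)%N by lia.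
  rewrite (nth_ellseq f (Ordinal lt_ik)) (nth_ellseq f (Ordinal lt_i1k)).
  by apply: (implyP (forallP (le_f (Ordinal lt_ik)) (Ordinal lt_i1k))); exact: leqnSn.
apply/forallP => j; apply/implyP => le_ij.
have := sorted_leq_nth geq_trans leqnn 0%N sorted_f.
move=> /(_ i j); rewrite !inE size_ellseq !ltn_ord !nth_ellseq; exact.
Qed.

Lemma ellseq_nonincr_seqs s : s \in nonincr_seqs n k ->
  exists2 f : {ffun 'I_k -> 'I_n}, nonincr f & ellseq f = s.
Proof.
rewrite mem_nonincr_seqs => /and3P [/eqP size_s s_bounds s_sorted].
have s_range (i : 'I_k) : (0 < nth 0%N s i <= n)%N.
  by apply: (allP s_bounds); rewrite mem_nth // size_s.
have lt_pred (i : 'I_k) : ((nth 0%N s i).-1 < n)%N by have := s_range i; lia.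
pose f := [ffun i => Ordinal (lt_pred i)].
have ellseq_f : ellseq f = s.
  apply: (@eq_from_nth _ 0%N) => [|i]; rewrite size_ellseq ?size_s // => lt_ik.
  rewrite (nth_ellseq f (Ordinal lt_ik)) /ell ffunE /=.
  by have := s_range (Ordinal lt_ik); rewrite /=; lia.
by exists f; rewrite // nonincr_sorted ellseq_f.
Qed.

Lemma big_nonincr_ellseq (F : seq nat -> rat) :
  \sum_(f : {ffun 'I_k -> 'I_n} | nonincr f) F (ellseq f) = \sum_(s <- nonincr_seqs n k) F s.
Proof.
rewrite -big_filter -(big_map (@ellseq n k) xpredT F); apply: perm_big.
apply: uniq_perm => [||s].
- by rewrite map_inj_uniq ?filter_uniq ?index_enum_uniq //; exact: ellseq_inj.
- exact: uniq_nonincr_seqs.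
apply/mapP/idP => [[f] | /ellseq_nonincr_seqs [f nonincr_f <-]].
  rewrite mem_filter => /andP [nonincr_f _] ->.
  rewrite mem_nonincr_seqs size_ellseq eqxx -nonincr_sorted nonincr_f andbT.
  by apply/allP => _ /mapP [i _ ->]; rewrite /ell ltn_ord.
by exists f; rewrite // mem_filter nonincr_f mem_index_enum.
Qed.

End EllSeq.

Lemma zeta_star_seqE n k : zeta_star n k = \sum_(s <- nonincr_seqs n k) seq_weight s.
Proof. by rewrite -big_nonincr_ellseq; apply: eq_bigr => f _; rewrite wprod_ellseq. Qed.

Lemma tie_sum_seqE n k :
  tie_sum n k = \sum_(s <- nonincr_seqs n k) (seq_ties s)%:R * seq_weight s.
Proof.
rewrite -big_nonincr_ellseq; apply: eq_bigr => f _.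
by rewrite sigma_ellseq wprod_ellseq.
Qed.

Lemma zeta_star0 n : zeta_star n 0 = 1.
Proof. by rewrite zeta_star_seqE big_seq1 /seq_weight big_nil. Qed.

Lemma zeta_starS n k :
  zeta_star n k.+1 = \sum_(1 <= a < n.+1) a%:R^-1 * zeta_star a k.
Proof.
rewrite zeta_star_seqE nonincr_seqsS big_allpairs_dep; apply: eq_bigr => a _.
by rewrite zeta_star_seqE mulr_sumr; apply: eq_bigr => t _; rewrite /seq_weight big_cons.
Qed.

Lemma zeta_star_splitS n k :
  zeta_star n.+1 k.+1 = zeta_star n k.+1 + (n.+1)%:R^-1 * zeta_star n.+1 k.
Proof. by rewrite !zeta_starS big_nat_recr. Qed.

Lemma zeta_star_geom n k :
  zeta_star n.+1 k = \sum_(l < k.+1) ((n.+1)%:R ^+ l)^-1 * zeta_star n (k - l).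
Proof.
elim: k => [|k IHk]; first by rewrite big_ord1 !zeta_star0 expr0 invr1 mul1r.
rewrite zeta_star_splitS IHk mulr_sumr [RHS]big_ord_recl expr0 invr1 mul1r subn0.
by congr (_ + _); apply: eq_bigr => l _; rewrite /= subSS exprS invfM mulrA.
Qed.

Lemma tie_sum0 n : tie_sum n 0 = 0.
Proof. by rewrite tie_sum_seqE big_seq1 mul0r. Qed.

(* A tie between the first two entries of a :: t forces t to start with a. *)
Lemma big_head_tie a k :
  \sum_(t <- nonincr_seqs a k) (head_tie a t)%:R * seq_weight t =
  if k is k'.+1 then a%:R^-1 * zeta_star a k' else 0.
Proof.
case: k => [|k]; first by rewrite big_seq1 mul0r.
case: a => [|a]; first by rewrite big_nil invr0 mul0r.
have no_tie b : (1 <= b < a.+1)%N ->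
    \sum_(t <- nonincr_seqs b k) (head_tie a.+1 (b :: t))%:R * seq_weight (b :: t) = 0.
  by case/andP=> _ lt_ba; rewrite big1 // => t _; rewrite /= gtn_eqF // mul0r.
rewrite nonincr_seqsS big_allpairs_dep big_nat_recr //= (eq_big_nat _ _ no_tie) big1_eq add0r.
rewrite zeta_star_seqE mulr_sumr; apply: eq_bigr => t _.
by rewrite /= eqxx mul1r /seq_weight big_cons.
Qed.

Lemma tie_sumS n k :
  tie_sum n k.+1 = \sum_(1 <= a < n.+1) a%:R^-1 *
    (tie_sum a k + if k is k'.+1 then a%:R^-1 * zeta_star a k' else 0).
Proof.
rewrite tie_sum_seqE nonincr_seqsS big_allpairs_dep; apply: eq_bigr => a _.
rewrite tie_sum_seqE -big_head_tie -big_split /= mulr_sumr; apply: eq_bigr => t _.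
by rewrite seq_ties_cons /seq_weight big_cons natrD; ring.
Qed.

Lemma harm0 i : harm 0 i = 0.
Proof. by rewrite /harm big_geq. Qed.

Lemma harmS n i : harm n.+1 i = harm n i + ((n.+1)%:R ^+ i)^-1.
Proof. by rewrite /harm big_nat_recr. Qed.

Definition harm_zeta_conv n k : rat :=
  \sum_(l < k.-1) harm n (l + 2) * zeta_star n (k - l - 2).

Lemma harm_zeta_convS n k :
  harm_zeta_conv n.+1 k.+1 = harm_zeta_conv n k.+1 + (n.+1)%:R^-1 *
    (harm_zeta_conv n.+1 k + if k is k'.+1 then (n.+1)%:R^-1 * zeta_star n.+1 k' else 0).
Proof.
case: k => [|k]; first by rewrite /harm_zeta_conv !big_ord0 mulr0 !addr0.
set c := (n.+1)%:R^-1 : rat.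
set A := \sum_(l < k.+1) harm n.+1 (l + 2) * zeta_star n (k - l).
set B := \sum_(l < k) harm n.+1 (l + 2) * zeta_star n.+1 (k - l - 1).
have convB : harm_zeta_conv n.+1 k.+1 = B.
  by rewrite /harm_zeta_conv /=; apply: eq_bigr => l _; congr (_ * zeta_star _ _); lia.
have convAB : harm_zeta_conv n.+1 k.+2 = A + c * B.
  rewrite /harm_zeta_conv /= big_ord_recr /A /B big_ord_recr /=.
  rewrite (_ : k.+2 - k - 2 = 0)%N ?subnn ?zeta_star0; last by lia.
  rewrite mulr_sumr addrAC -big_split /=; congr (_ + _); apply: eq_bigr => l _.
  have lt_lk := ltn_ord l; set j := (k - l - 1)%N.
  rewrite (_ : k.+2 - l - 2 = j.+1)%N; last by rewrite /j; lia.
  rewrite (_ : k - l = j.+1)%N; last by rewrite /j; lia.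
  by rewrite zeta_star_splitS -/c; ring.
have convA : A = harm_zeta_conv n k.+2 + c * (c * zeta_star n.+1 k).
  rewrite /A zeta_star_geom /harm_zeta_conv /= !mulr_sumr -big_split /=.
  apply: eq_bigr => l _; rewrite harmS exprD expr2 !invfM -/c.
  by rewrite (_ : k.+2 - l - 2 = k - l)%N; [ring | lia].
by rewrite convAB convA convB; ring.
Qed.

Lemma tie_sum_harm_zeta_conv n k : tie_sum n k = harm_zeta_conv n k.
Proof.
elim: n k => [|n IHn] k.
  case: k => [|k]; first by rewrite tie_sum0 /harm_zeta_conv big_ord0.
  rewrite tie_sumS big_geq // /harm_zeta_conv big1 // => l _.
  by rewrite harm0 mul0r.
elim: k => [|k IHk]; first by rewrite tie_sum0 /harm_zeta_conv big_ord0.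
rewrite harm_zeta_convS -IHk -IHn tie_sumS big_nat_recr //=.
by congr (_ + _); rewrite -tie_sumS; case: k {IHk}.
Qed.

Theorem mainTheorem13 (n k : nat) (hn : (1 <= n)%N) (hk : (1 <= k)%N) :
  expS n k =
  (zeta_star n k)^-1 *
    \sum_(l < k.-1) harm n (l + 2) * zeta_star n (k - l - 2).
Proof. by rewrite expS_tie_sum tie_sum_harm_zeta_conv mulrC. Qed.
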